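(* Let $r$ be a constant positive integer and $\varepsilon>0$ a constant. For each $n$, let $L(r,m)=(A\cup B,E)$ be a connected bipartite graph on $m=m(n)$ vertices with bipartition $(A,B)$ such that every vertex in $A$ has at most $r$ neighbors in $B$. If $m=O(n^{1-\varepsilon})$, then $$\lim_{n\to\infty}\frac{\log M_{L(r,m)}(n)}{\binom{n}{2}}=1.$$
   Context: Logarithms are base 2. For graphs $G,G'$ on the same vertex set $[n]$, their symmetric difference $G\oplus G'$ is the graph on $[n]$ whose edge set consists of all edges belonging to exactly one of $G,G'$. For a graph $L$, $M_{L}(n)$ denotes the maximum possible size of a family $\mathcal{G}$ of graphs on vertex set $[n]$ such that for any two distinct $G,G'\in\mathcal{G}$, $G\oplus G'$ contains $L$ as a subgraph. *)

From mathcomp Require Import all_boot.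
Set Implicit Arguments. Unset Strict Implicit. Unset Printing Implicit Defensive.

(* A graph on vertex set [n] = 'I_n is a set of 2-element subsets (edges). *)
Definition graph (n : nat) := {set {set 'I_n}}.

Definition is_graph n (G : graph n) : bool := [forall e in G, #|e| == 2].

Definition symdiff n (G G' : graph n) : graph n := (G :\: G') :|: (G' :\: G).

Definition contains_sub n m (H : graph n) (L : rel 'I_m) : bool :=
  [exists f : {ffun 'I_m -> 'I_n},
     injectiveb f && [forall x, forall y, L x y ==> ([set f x; f y] \in H)]].

Definition good_family n m (L : rel 'I_m) (F : {set graph n}) : bool :=
  [forall G in F, is_graph G] &&
  [forall G in F, forall G' in F, (G != G') ==> contains_sub (symdiff G G') L].

Definition M_L n m (L : rel 'I_m) : nat :=
  \max_(F : {set graph n} | good_family L F) #|F|.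

Definition simple_graph m (L : rel 'I_m) : Prop :=
  (forall x y, L x y = L y x) /\ (forall x, ~~ L x x).
Definition connected m (L : rel 'I_m) : Prop := forall x y, connect L x y.

Definition bipartite_deg m (L : rel 'I_m) (A : {set 'I_m}) (r : nat) : Prop :=
  (forall x y, L x y -> (x \in A) = (y \notin A)) /\
  (forall x, x \in A -> #|[set y | L x y]| <= r).

(* Trivially M_L(n) <= 2 ^ C(n, 2).  Conversely, every graph H on [n] with
   at least d ~ n^2 / (4 s^2) edges contains L: by dependent random choice (the common
   neighbourhood of t random vertices, minus one vertex of each "bad" small subset) H has a
   set U of at least m vertices whose r-subsets all have at least m common neighbours, and
   L embeds greedily, its B-side into U and each vertex of A into the common neighbourhood
   of the images of its neighbours.  This needs m^t (n+1)^r = o(n^t), which holds once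
   t eps >= r + 2 because m = O(n^(1-eps)).  Hence any Gilbert-Varshamov code of edge sets
   with minimum distance d is an admissible family; bounding Hamming balls by weighting a
   set J with s^|complement of J| gives log2 M_L(n) >= (1 - 4/s) C(n, 2). *)

From mathcomp Require Import all_boot zify.
From Stdlib Require Import Reals Lra.
(* [Reals] rebinds [_ ^ _] in [nat_scope] to [Nat.pow]; restore [expn]. *)
Import ssrnat.
Set Implicit Arguments. Unset Strict Implicit. Unset Printing Implicit Defensive.

(** * Counting *)

Lemma leq_expn2r m1 m2 e : m1 <= m2 -> m1 ^ e <= m2 ^ e.
Proof. by move=> le12; case: e => // e; rewrite leq_exp2r. Qed.

Lemma card_small_sets_le (T : finType) r : #|[set S : {set T} | #|S| <= r]| <= #|T|.+1 ^ r.
Proof.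
pose code (S : {set T}) : {ffun 'I_r -> option T} :=
  [ffun i : 'I_r => nth None [seq Some x | x <- enum S] i].
have codeE (S : {set T}) x : #|S| <= r -> (x \in S) = (Some x \in codom (code S)).
  move=> Sr; apply/idP/codomP => [Sx | [i]].
    have xS : index x (enum S) < size (enum S) by rewrite index_mem mem_enum.
    have xr : index x (enum S) < r by rewrite (leq_trans xS) // -cardE.
    by exists (Ordinal xr); rewrite ffunE (nth_map x None _ xS) nth_index ?mem_enum.
  rewrite ffunE; case: (ltnP i (size (enum S))) => [iS | Si].
    by rewrite (nth_map x None _ iS) => -[->]; rewrite -mem_enum mem_nth.
  by rewrite nth_default ?size_map.
have code_inj : {in [set S : {set T} | #|S| <= r] &, injective code}.
  by move=> S1 S2; rewrite !inE => S1r S2r eq12; apply/setP => x; rewrite !codeE // eq12.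
rewrite -(card_in_imset code_inj) (leq_trans (max_card _)) //.
by rewrite card_ffun card_option card_ord.
Qed.

Lemma card_set_sum (T : finType) (P : pred T) : #|[set x | P x]| = \sum_x P x.
Proof. by rewrite -sum1dep_card big_mkcond. Qed.

Lemma sum_card_set_exchange (X Y : finType) (R : X -> Y -> bool) :
  \sum_x #|[set y | R x y]| = \sum_y #|[set x | R x y]|.
Proof.
under eq_bigr do rewrite card_set_sum.
by rewrite exchange_big; apply: eq_bigr => y _; rewrite card_set_sum.
Qed.

Lemma exists_subset_avoiding (T : finType) (X : {set T}) (B : {set {set T}}) :
  set0 \notin B ->
  exists U : {set T},
    [/\ U \subset X, #|X| <= #|U| + #|B| & {in B, forall S : {set T}, ~~ (S \subset U)}].
Proof.
move=> B_ne0; pose P := [set x | [exists S in B, [pick y in S] == Some x]].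
exists (X :\: P); split; first exact: subsetDl.
  have P_B : #|P| <= #|B|.
    rewrite -(card_imset _ Some_inj).
    apply: leq_trans (leq_imset_card (fun S : {set T} => [pick y in S]) B).
    apply: subset_leq_card; apply/subsetP => _ /imsetP[x + ->].
    by rewrite inE => /exists_inP[S BS /eqP <-]; rewrite imset_f.
  by rewrite -(cardsID P X) addnC leq_add2l (leq_trans (subset_leq_card (subsetIr _ _))).
move=> S BS; have [x Sx] : exists x, x \in S.
  by apply/set0Pn; apply: contraNneq B_ne0 => <-.
have [y Sy pickS] : exists2 y, y \in S & [pick y in S] = Some y.
  by case: pickP => [y Sy | /(_ x)]; [exists y | rewrite Sx].
apply/subsetPn; exists y; rewrite // !inE negb_and negbK.
by apply/orP; left; apply/exists_inP; exists S; rewrite ?pickS.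
Qed.

Lemma exists_leq_of_sum_leq (I : finType) (f g : I -> nat) :
  \sum_i g i <= \sum_i f i -> 0 < #|I| -> exists i, g i <= f i.
Proof.
move=> sum_le I_gt0; case: (pickP (fun i => g i <= f i)) => [i | f_lt]; first by exists i.
have : \sum_i (f i + 1) <= \sum_i g i.
  by apply: leq_sum => i _; rewrite addn1 ltnNge f_lt.
rewrite big_split sum_nat_const /= muln1.
move=> /leq_trans/(_ sum_le); rewrite -[X in _ <= X]addn0 leq_add2l leqn0.
by rewrite -leqn0 leqNgt I_gt0.
Qed.

Lemma exists_injective_choice (I T : finType) (t0 : T) (C : I -> {set T}) (D : {set I}) :
  {in D, forall i, #|D| <= #|C i|} ->
  exists2 g : I -> T, {in D &, injective g} & {in D, forall i, g i \in C i}.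
Proof.
have [k] := ubnP #|D|; elim: k D => // k IH D; rewrite ltnS => Dk bigC.
have [D0 | [i0 Di0]] := set_0Vmem D.
  by exists (fun=> t0) => [i|i]; rewrite D0 inE.
have Dk' : #|D :\ i0| < k by rewrite (cardsD1 i0) Di0 in Dk.
have bigC' : {in D :\ i0, forall i, #|D :\ i0| <= #|C i|}.
  move=> i /setD1P[_ Di]; apply: leq_trans (bigC i Di).
  by rewrite subset_leq_card // subD1set.
have [g g_inj gC] := IH _ Dk' bigC'.
have [x /setDP[xC xg]] : exists x, x \in C i0 :\: g @: (D :\ i0).
  apply/set0Pn; rewrite -card_gt0 cardsD.
  have := bigC i0 Di0; rewrite (cardsD1 i0 D) Di0.
  have := leq_imset_card g (D :\ i0); have := subset_leq_card (subsetIr (C i0) (g @: (D :\ i0))).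
  lia.
have g_D i : i \in D -> i != i0 -> g i \in g @: (D :\ i0).
  by move=> Di ii0; rewrite imset_f // !inE ii0.
exists (fun i => if i == i0 then x else g i) => [i j Di Dj | i Di] /=.
  case: eqP => [-> | /eqP ii0]; case: eqP => [-> | /eqP ji0] //.
  - by move=> xg_eq; move: xg; rewrite xg_eq g_D.
  - by move=> gx_eq; move: xg; rewrite -gx_eq g_D.
  - by apply: g_inj; rewrite !inE ?ii0 ?ji0.
by case: eqP => [-> // | /eqP ii0]; apply: gC; rewrite !inE ii0.
Qed.

Lemma rearrangement_expn a b t : a * b ^ t + b * a ^ t <= a ^ t.+1 + b ^ t.+1.
Proof.
wlog ab : a b / a <= b => [hwlog|].
  by case: (leqP a b) => [/hwlog // | /ltnW /hwlog]; rewrite addnC [_ + b ^ _]addnC.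
have := leq_expn2r t ab; rewrite !expnS; nia.
Qed.

Lemma chebyshev_sum_expn (I : finType) (x : I -> nat) t :
  (\sum_i x i) * (\sum_i x i ^ t) <= #|I| * \sum_i x i ^ t.+1.
Proof.
have sum_prod : (\sum_i x i) * (\sum_i x i ^ t) = \sum_i \sum_j x i * x j ^ t.
  by rewrite big_distrl; apply: eq_bigr => i _; rewrite big_distrr.
rewrite -(leq_pmul2l (isT : 0 < 2)) mul2n -addnn {1}sum_prod sum_prod [X in _ + X]exchange_big.
rewrite -big_split /=; apply: (@leq_trans (\sum_i \sum_j (x i ^ t.+1 + x j ^ t.+1))).
  by apply: leq_sum => i _; rewrite -big_split leq_sum // => j _; apply: rearrangement_expn.
under eq_bigr do rewrite big_split /= sum_nat_const.
by rewrite big_split /= sum_nat_const -big_distrr /= mul2n -addnn.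
Qed.

Lemma power_mean_expn (I : finType) (x : I -> nat) t :
  (\sum_i x i) ^ t * #|I| <= #|I| ^ t * \sum_i x i ^ t.
Proof.
elim: t => [|t IH].
  by rewrite expn0 mul1n expn0 mul1n sum_nat_const muln1 cardT.
rewrite expnS -mulnA (leq_trans (leq_mul (leqnn _) IH)) // mulnCA expnSr -mulnA leq_mul2l.
by rewrite chebyshev_sum_expn orbT.
Qed.

(** * Embedding bounded-degree bipartite graphs in dense graphs *)

Definition common_nbhd n (H : graph n) (S : {set 'I_n}) : {set 'I_n} :=
  [set u | [forall s in S, [set u; s] \in H]].

Lemma contains_sub_of_rich_set n m (L : rel 'I_m) (A : {set 'I_m}) r
    (H : graph n) (U : {set 'I_n}) :
  0 < n -> symmetric L -> bipartite_deg L A r -> m <= #|U| ->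
  (forall S : {set 'I_n}, S \subset U -> #|S| <= r -> m <= #|common_nbhd H S|) ->
  contains_sub H L.
Proof.
move=> n_gt0 L_sym [L_bip degA] mU richU; pose t0 := Ordinal n_gt0.
(* Embed [~: A] injectively into [U], then each [a \in A] into the common neighbourhood
   of the images of its neighbours, avoiding the image of [~: A]. *)
have nbhd_notA a y : a \in A -> L a y -> y \in ~: A.
  by move=> Aa /L_bip; rewrite Aa inE => <-.
have [h h_inj hU] :
    exists2 h : 'I_m -> 'I_n, {in ~: A &, injective h} & {in ~: A, forall y, h y \in U}.
  apply: (@exists_injective_choice _ _ t0 (fun=> U)) => y _.
  by rewrite (leq_trans (max_card _)) // card_ord.
pose C a := common_nbhd H (h @: [set y | L a y]) :\: h @: ~: A.
have [g g_inj gC] :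
    exists2 g : 'I_m -> 'I_n, {in A &, injective g} & {in A, forall a, g a \in C a}.
  apply: (@exists_injective_choice _ _ t0 C) => a Aa.
  have richNa : m <= #|common_nbhd H (h @: [set y | L a y])|.
    apply: richU; last exact: leq_trans (leq_imset_card _ _) (degA a Aa).
    by apply/subsetP => _ /imsetP[y + ->]; rewrite inE => /(nbhd_notA a y Aa) /hU.
  set N := common_nbhd H _ in richNa *.
  have hB : #|N :&: h @: ~: A| <= #|~: A|.
    exact: leq_trans (subset_leq_card (subsetIr _ _)) (leq_imset_card _ _).
  have cA : #|A| + #|~: A| = m by rewrite cardsC card_ord.
  by rewrite cardsD -{1}(addnK #|~: A| #|A|) cA leq_sub.
have g_nbhd a y : a \in A -> L a y -> [set g a; h y] \in H.
  move=> Aa Lay; have /setDP[+ _] := gC a Aa; rewrite inE => /forall_inP; apply.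
  by rewrite imset_f // inE.
have g_notin_h a y : a \in A -> y \notin A -> g a != h y.
  move=> Aa Ay; have /setDP[_] := gC a Aa; apply: contraNneq => ->.
  by rewrite imset_f // inE.
apply/existsP; exists [ffun x => if x \in A then g x else h x]; apply/andP; split.
  apply/injectiveP => x y; rewrite !ffunE.
  case: (boolP (x \in A)) => Ax; case: (boolP (y \in A)) => Ay.
  - exact: g_inj.
  - by move/eqP; rewrite (negbTE (g_notin_h x y Ax Ay)).
  - by move/esym/eqP; rewrite (negbTE (g_notin_h y x Ay Ax)).
  - by apply: h_inj; rewrite inE.
apply/forallP => x; apply/forallP => y; apply/implyP => Lxy; rewrite !ffunE.
have := L_bip x y Lxy; case: (boolP (x \in A)) => Ax /esym.
  by move=> /negbTE ->; exact: g_nbhd.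
by move/negbFE => Ay; rewrite Ay setUC; apply: g_nbhd; rewrite // L_sym.
Qed.

Section DependentRandomChoice.

Variables (n : nat) (H : graph n).

Lemma card_ffun_common_nbhd t (S : {set 'I_n}) :
  #|[set T : {ffun 'I_t -> 'I_n} | S \subset common_nbhd H [set T i | i : 'I_t]]|
  = #|common_nbhd H S| ^ t.
Proof.
rewrite -[t in RHS]card_ord -card_ffun_on; apply: eq_card => T; rewrite inE.
apply/subsetP/ffun_onP => [SN i | NS s Ss]; rewrite inE.
  apply/forall_inP => s /SN; rewrite inE => /forall_inP/(_ (T i)).
  by rewrite setUC imset_f // => /(_ isT).
apply/forall_inP => _ /imsetP[i _ ->]; have := NS i; rewrite inE setUC.
by move/forall_inP/(_ s Ss).
Qed.

Lemma sum_card_common_nbhd_ffun t :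
  \sum_(T : {ffun 'I_t -> 'I_n}) #|common_nbhd H [set T i | i : 'I_t]|
  = \sum_u #|common_nbhd H [set u]| ^ t.
Proof.
pose N (T : {ffun 'I_t -> 'I_n}) := common_nbhd H [set T i | i : 'I_t].
rewrite (eq_bigr (fun T => #|[set u | u \in N T]|)) => [|T _]; last first.
  by apply: eq_card => u; rewrite inE.
rewrite sum_card_set_exchange; apply: eq_bigr => u _.
rewrite -card_ffun_common_nbhd; apply: eq_card => T.
by rewrite [in LHS]inE [in RHS]inE sub1set.
Qed.

Lemma common_nbhd0 : common_nbhd H set0 = setT.
Proof. by apply/setP => u; rewrite !inE; apply/forall_inP => s; rewrite inE. Qed.

Lemma dependent_random_choice m r t :
  0 < n -> m <= n ->
  m * n ^ t + n.+1 ^ r * m ^ t <= \sum_u #|common_nbhd H [set u]| ^ t ->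
  exists2 U : {set 'I_n}, m <= #|U| &
    forall S : {set 'I_n}, S \subset U -> #|S| <= r -> m <= #|common_nbhd H S|.
Proof.
move=> n_gt0 mn dense.
pose N (T : {ffun 'I_t -> 'I_n}) := common_nbhd H [set T i | i : 'I_t].
pose bad (S : {set 'I_n}) := (#|S| <= r) && (#|common_nbhd H S| < m).
pose B T := [set S | bad S && (S \subset N T)].
(* On average over [T], [N T] exceeds [m] by at least the number of bad sets it contains;
   deleting one vertex of each of them leaves [U]. *)
have sumB : \sum_T #|B T| <= n.+1 ^ r * m ^ t.
  rewrite sum_card_set_exchange.
  apply: (@leq_trans (\sum_(S : {set 'I_n} | #|S| <= r) m ^ t)); last first.
    rewrite sum_nat_cond_const leq_mul2r -[in X in _ <= X ^ _](card_ord n).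
    by rewrite card_small_sets_le orbT.
  rewrite [leqRHS]big_mkcond; apply: leq_sum => S _.
  case: (boolP (bad S)) => [/andP[-> smallS] | _]; last first.
    by rewrite (_ : [set T | _] = set0) ?cards0 //; apply/setP => T; rewrite !inE.
  rewrite (@eq_card _ _ [set T | S \subset N T]) => [|T]; last by rewrite !inE.
  by rewrite card_ffun_common_nbhd leq_expn2r // ltnW.
have [T NT_large] : exists T, m + #|B T| <= #|N T|.
  apply: exists_leq_of_sum_leq; last by rewrite card_ffun !card_ord expn_gt0 n_gt0.
  rewrite big_split sum_nat_const card_ffun !card_ord sum_card_common_nbhd_ffun /=.
  by rewrite (leq_trans _ dense) // mulnC leq_add2l.
have B_ne0 : set0 \notin B T.
  by rewrite !inE /bad common_nbhd0 cardsT card_ord ltnNge mn /= andbF.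
have [U [UN NT_le richU]] := exists_subset_avoiding (N T) B_ne0.
exists U => [|S SU Sr]; first by rewrite -(leq_add2r #|B T|) (leq_trans NT_large NT_le).
rewrite leqNgt; apply/negP => NS_small.
have SB : S \in B T by rewrite !inE /bad Sr NS_small (subset_trans SU UN).
by have := richU S SB; rewrite SU.
Qed.

Lemma common_nbhd1 u : common_nbhd H [set u] = [set v | [set v; u] \in H].
Proof.
apply/setP => v; rewrite !inE; apply/forall_inP/idP => [|vuH s]; first by apply; rewrite inE.
by rewrite inE => /eqP ->.
Qed.

Lemma card_le_sum_card_nbhd : is_graph H -> #|H| <= \sum_u #|common_nbhd H [set u]|.
Proof.
move=> /forall_inP H_graph.
pose P := [set p : 'I_n * 'I_n | [set p.2; p.1] \in H].
have -> : \sum_u #|common_nbhd H [set u]| = #|P|.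
  under eq_bigr do rewrite common_nbhd1 card_set_sum.
  by rewrite pair_bigA card_set_sum.
rewrite (leq_trans _ (leq_imset_card (fun p => [set p.2; p.1]) P)) //.
apply/subset_leq_card/subsetP => e He.
have /cards2P[a [b [_ e_ab]]] := H_graph e He.
by apply/imsetP; exists (b, a); rewrite // inE -e_ab.
Qed.

End DependentRandomChoice.

Lemma contains_sub_of_card_ge n m (L : rel 'I_m) (A : {set 'I_m}) r (H : graph n) t d :
  0 < n -> m <= n -> symmetric L -> bipartite_deg L A r -> is_graph H -> d <= #|H| ->
  n ^ t * (m * n ^ t + n.+1 ^ r * m ^ t) <= d ^ t * n -> contains_sub H L.
Proof.
move=> n_gt0 mn L_sym L_bip H_graph dH dense.
have deg_large : m * n ^ t + n.+1 ^ r * m ^ t <= \sum_u #|common_nbhd H [set u]| ^ t.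
  rewrite -(leq_pmul2l (_ : 0 < n ^ t)) ?expn_gt0 ?n_gt0 // (leq_trans dense) //.
  have := power_mean_expn (fun u => #|common_nbhd H [set u]|) t; rewrite card_ord.
  apply: leq_trans; rewrite leq_mul2r leq_expn2r ?orbT //.
  exact: leq_trans dH (card_le_sum_card_nbhd H_graph).
have [U mU richU] := dependent_random_choice n_gt0 mn deg_large.
exact: contains_sub_of_rich_set n_gt0 L_sym L_bip mU richU.
Qed.

(** * Codes of graphs *)

Section Codes.

Variable E : finType.
Implicit Types (J K : {set E}) (F : {set {set E}}).

Definition setSymD J K := (J :\: K) :|: (K :\: J).

Lemma setSymDC J K : setSymD J K = setSymD K J.
Proof. exact: setUC. Qed.

Lemma setSymDv J : setSymD J J = set0.
Proof. by rewrite /setSymD setDv setU0. Qed.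

Lemma setSymDK K : involutive (setSymD^~ K).
Proof. by move=> J; apply/setP => x; rewrite !inE; case: (x \in J); case: (x \in K). Qed.

Definition separated d F :=
  [forall J in F, forall K in F, (J != K) ==> (d <= #|setSymD J K|)].

Lemma card_ball K d :
  #|[set J | #|setSymD J K| < d]| = #|[set D : {set E} | #|D| < d]|.
Proof.
rewrite -(card_imset _ (can_inj (setSymDK K))); apply: eq_card => D.
rewrite !inE; apply/imsetP/idP => [[J] | DK]; first by rewrite inE => JK ->.
by exists (setSymD D K); rewrite ?inE setSymDK.
Qed.

Lemma sum_expn_card_setC s : \sum_(J : {set E}) s ^ #|~: J| = s.+1 ^ #|E|.
Proof.
have -> : s.+1 ^ #|E| = \prod_(x : E) (1 + s) by rewrite prod_nat_const add1n.
rewrite bigA_distr; apply: eq_bigr => J _.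
rewrite (eq_bigr (fun x => if x \in ~: J then s else 1)) => [|x _]; last first.
  by rewrite inE; case: (x \in J).
by rewrite -big_mkcond prod_nat_const.
Qed.

Lemma card_small_sets_weighted_le s d :
  0 < s -> s ^ #|E| * #|[set D : {set E} | #|D| < d]| <= s ^ d * s.+1 ^ #|E|.
Proof.
(* Weight each [J] by [s ^ #|~: J|]: the weights sum to [s.+1 ^ #|E|], and a set with
   fewer than [d] elements weighs at least [s ^ (#|E| - d)]. *)
move=> s_gt0; rewrite -sum_expn_card_setC big_distrr /= mulnC -sum_nat_const.
rewrite [leqRHS](bigID (mem [set D : {set E} | #|D| < d])) /= (leq_trans _ (leq_addr _ _)) //.
apply: leq_sum => J; rewrite inE => Jd.
by rewrite -(cardsC J) expnD leq_mul2r (leq_pexp2l s_gt0 (ltnW Jd)) orbT.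
Qed.

Lemma gilbert_varshamov d :
  0 < d -> exists2 F, separated d F & 2 ^ #|E| <= #|F| * #|[set D : {set E} | #|D| < d]|.
Proof.
move=> d_gt0.
have sep0 : separated d set0 by apply/forall_inP => J; rewrite inE.
case: (arg_maxnP (fun F => #|F|) sep0) => F sepF maxF; exists F => //.
(* [F] is a maximal separated family, so the balls of radius [d] around it cover. *)
have cover J : [exists K in F, #|setSymD J K| < d].
  case: (boolP [exists K in F, _]) => [// | /exists_inP farJ]; exfalso.
  have JF : J \notin F by apply/negP => JF; apply: farJ; exists J; rewrite ?setSymDv ?cards0.
  suff /maxF : separated d (J |: F) by rewrite /geq cardsU1 JF /= ltnn.
  apply/forall_inP => K /setU1P[-> | KF]; apply/forall_inP => K' /setU1P[-> | K'F];
    apply/implyP => KK'.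
  - by rewrite eqxx in KK'.
  - by rewrite leqNgt; apply/negP => ?; apply: farJ; exists K'.
  - by rewrite setSymDC leqNgt; apply/negP => ?; apply: farJ; exists K.
  - by move/forall_inP/(_ K KF)/forall_inP/(_ K' K'F)/implyP: sepF; apply.
rewrite -[#|E|]cardsT -card_powerset powersetT cardsT.
apply: (@leq_trans (\sum_(J : {set E}) 1)); first by rewrite sum1_card.
apply: (@leq_trans (\sum_(J : {set E}) #|[set K | (K \in F) && (#|setSymD J K| < d)]|)).
  apply: leq_sum => J _; rewrite card_gt0; apply/set0Pn.
  by case/exists_inP: (cover J) => K ? ?; exists K; rewrite inE; apply/andP.
rewrite sum_card_set_exchange (bigID (mem F)) /= [X in _ + X]big1 ?addn0; last first.
  by move=> K /negbTE KF; apply/eqP; rewrite cards_eq0; apply/eqP/setP => J; rewrite !inE KF.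
rewrite -sum_nat_const; apply/eq_leq/eq_bigr => K KF.
by rewrite -(card_ball K); apply: eq_card => J; rewrite !inE KF.
Qed.

End Codes.

Lemma M_L_le n m (L : rel 'I_m) : M_L n L <= 2 ^ 'C(n, 2).
Proof.
apply/bigmax_leqP => F /andP[/forall_inP F_graphs _].
rewrite -[in X in _ <= 2 ^ 'C(X, _)](card_ord n) -card_draws -card_powerset subset_leq_card //.
apply/subsetP => G /F_graphs G_graph; rewrite powersetE.
by apply/subsetP => e Ge; rewrite inE; move/forall_inP: G_graph; apply.
Qed.

Lemma M_L_gt0 n m (L : rel 'I_m) : 0 < M_L n L.
Proof.
apply: leq_trans (@leq_bigmax_cond _ (fun F => good_family L F) (fun F => #|F|) [set set0] _).
  by rewrite cards1.
apply/andP; split; apply/forall_inP => G; rewrite inE => /eqP ->.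
  by apply/forall_inP => e; rewrite inE.
by apply/forall_inP => G'; rewrite inE => /eqP ->; rewrite eqxx.
Qed.

Notation edge n := {e : {set 'I_n} | #|e| == 2}.

Lemma card_edge n : #|{: edge n}| = 'C(n, 2).
Proof.
rewrite card_sig -[n in 'C(n, _)]card_ord -card_draws.
by apply: eq_card => e; rewrite !inE.
Qed.

Lemma separated_le_M_L n m (L : rel 'I_m) d (F : {set {set edge n}}) :
  (forall H : graph n, is_graph H -> d <= #|H| -> contains_sub H L) ->
  separated d F -> #|F| <= M_L n L.
Proof.
move=> dense_contains /forall_inP sepF.
pose graph_of (J : {set edge n}) : graph n := [set val e | e in J].
have graph_ofP J : is_graph (graph_of J).
  by apply/forall_inP => _ /imsetP[e _ ->]; exact: valP e.
rewrite -(card_imset _ (imset_inj val_inj : injective graph_of)).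
apply: (@leq_bigmax_cond _ (fun F => good_family L F) (fun F => #|F|)).
apply/andP; split; first by apply/forall_inP => _ /imsetP[J _ ->].
apply/forall_inP => _ /imsetP[J JF ->]; apply/forall_inP => _ /imsetP[K KF ->].
apply/implyP => JK; apply: dense_contains.
  by apply/forall_inP => e; rewrite !inE => /orP[] /andP[_ /imsetP[x _ ->]]; exact: valP x.
have JK' : J != K by apply: contraNneq JK => ->.
have /forall_inP/(_ K KF)/implyP/(_ JK') := sepF J JF; move/leq_trans; apply.
rewrite -(card_imset _ val_inj); apply/subset_leq_card/subsetP.
by move=> _ /imsetP[e + ->]; rewrite !inE !(mem_imset _ _ val_inj).
Qed.

Lemma M_L_lower_bound n m (L : rel 'I_m) d s :
  0 < d -> 0 < s ->
  (forall H : graph n, is_graph H -> d <= #|H| -> contains_sub H L) ->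
  2 ^ 'C(n, 2) * s ^ 'C(n, 2) <= M_L n L * s ^ d * s.+1 ^ 'C(n, 2).
Proof.
move=> d_gt0 s_gt0 dense_contains.
have [F sepF code_large] := gilbert_varshamov (edge n) d_gt0.
have := card_small_sets_weighted_le (edge n) d s_gt0.
rewrite card_edge in code_large * => ball_small.
rewrite -mulnA (leq_trans (leq_mul code_large (leqnn _))) // -mulnA.
rewrite leq_mul ?(separated_le_M_L dense_contains sepF) //.
by rewrite mulnC.
Qed.

(** * Asymptotics *)

Lemma INR_muln a b : INR (a * b) = (INR a * INR b)%R.
Proof. exact: mult_INR. Qed.

Lemma INR_expn a e : INR (a ^ e) = (INR a ^ e)%R.
Proof. by elim: e => // e IH; rewrite expnS INR_muln IH. Qed.

Lemma leq_of_INR_le a b : (INR a <= INR b)%R -> a <= b.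
Proof. by move=> /INR_le /leP. Qed.

Lemma expn_bound_of_Rpower_bound (eps C : R) r t (m : nat -> nat) N1 :
  (INR (r + 2) <= INR t * eps)%R ->
  (forall n, N1 <= n -> (INR (m n) <= C * Rpower (INR n) (1 - eps))%R) ->
  exists D, forall n, N1 <= n -> 0 < n -> m n ^ t * n ^ (r + 2) <= D * n ^ t.
Proof.
move=> t_eps m_small.
have [D D_large] := INR_archimed 1 (Rabs C ^ t) Rlt_0_1.
exists D => n N1n n_gt0; apply: leq_of_INR_le; rewrite !INR_muln !INR_expn.
have n_ge1 : (1 <= INR n)%R by apply: (le_INR 1); apply/leP.
have Rpower_gt0 y : (0 < Rpower (INR n) y)%R by apply: exp_pos.
have Rpower_split : (Rpower (INR n) (1 - eps) * Rpower (INR n) eps = INR n)%R.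
  by rewrite -Rpower_plus (_ : 1 - eps + eps = 1)%R ?Rpower_1 //; [lra | ring].
have mn_eps : (INR (m n) * Rpower (INR n) eps <= Rabs C * INR n)%R.
  apply: (Rle_trans _ (C * Rpower (INR n) (1 - eps) * Rpower (INR n) eps)).
    exact: Rmult_le_compat_r (Rlt_le _ _ (Rpower_gt0 eps)) (m_small n N1n).
  rewrite Rmult_assoc Rpower_split; apply: Rmult_le_compat_r; [lra | exact: Rle_abs].
have n_r2 : (INR n ^ (r + 2) <= Rpower (INR n) eps ^ t)%R.
  rewrite -!Rpower_pow ?Rpower_mult //; last lra.
  by apply: Rle_Rpower => //; rewrite Rmult_comm.
apply: (Rle_trans _ ((INR (m n) * Rpower (INR n) eps) ^ t)).
  by rewrite Rpow_mult_distr; apply: Rmult_le_compat_l => //; apply: pow_le; exact: pos_INR.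
apply: Rle_trans (pow_incr _ _ t _) _.
  by split; [apply: Rmult_le_pos; [exact: pos_INR | exact: Rlt_le] | exact: mn_eps].
rewrite Rpow_mult_distr; apply: Rmult_le_compat_r; first by apply: pow_le; lra.
lra.
Qed.

Lemma eventually_mul_expn_le (eps C : R) r t (m : nat -> nat) N1 :
  (INR (r + 2) <= INR t * eps)%R ->
  (forall n, N1 <= n -> (INR (m n) <= C * Rpower (INR n) (1 - eps))%R) ->
  forall K, exists N, forall n, N <= n -> K * m n ^ t * n.+1 ^ r <= n ^ t.
Proof.
move=> t_eps m_small K; have [D mD] := expn_bound_of_Rpower_bound t_eps m_small.
exists (N1 + K * 2 ^ r * D).+1 => n Nn.
have n_gt0 : 0 < n by apply: leq_trans Nn.
have KD : K * 2 ^ r * D <= n ^ 2 by rewrite (leq_trans _ (leq_pmulr n n_gt0)) //; lia.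
have n1r : n.+1 ^ r <= 2 ^ r * n ^ r by rewrite -expnMn leq_expn2r //; lia.
have := mD n (leq_trans (leq_addr _ _) (ltnW Nn)) n_gt0; rewrite expnD => mD_n.
rewrite -(leq_pmul2r (_ : 0 < n ^ 2)) ?expn_gt0 ?n_gt0 //.
move: KD n1r mD_n; set a := m n ^ t; set b := n ^ r; set c := n ^ 2.
set x := n.+1 ^ r; set y := 2 ^ r; set z := n ^ t => KD n1r mD_n.
have s1 : K * a * x * c <= K * a * (y * b) * c by rewrite leq_mul2r leq_mul2l n1r !orbT.
have s2 : K * y * (a * (b * c)) <= K * y * (D * z) by rewrite leq_mul2l mD_n orbT.
have s3 : K * y * (D * z) <= c * z by rewrite mulnA leq_mul2r KD orbT.
rewrite mulnC; nia.
Qed.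

Lemma threshold_of_expn_le n m s t r :
  0 < s -> 0 < t -> 4 * s <= n ->
  (2 * (4 * s) ^ (2 * t)) ^ t * m ^ t * n.+1 ^ r <= n ^ t ->
  m <= n /\ n ^ t * (m * n ^ t + n.+1 ^ r * m ^ t) <= ((n %/ (2 * s)) ^ 2) ^ t * n.
Proof.
move=> s_gt0 t_gt0 sn; set P := (4 * s) ^ (2 * t); set k := n %/ (2 * s) => cost.
(* [P] bounds [(n ^ 2 / k ^ 2) ^ t], as [n <= 4 s k]. *)
have P_gt0 : 0 < P by rewrite expn_gt0 muln_gt0 s_gt0.
have n1r : 0 < n.+1 ^ r by rewrite expn_gt0.
have Pm : 2 * P * m <= n.
  by rewrite -(leq_exp2r _ _ t_gt0) expnMn (leq_trans _ cost) // leq_pmulr.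
have P_cost : 2 * P * m ^ t * n.+1 ^ r <= n ^ t.
  apply: leq_trans cost; rewrite !leq_mul2r -{1}(expn1 (2 * P)) leq_pexp2l ?orbT //.
  by rewrite muln_gt0 P_gt0.
have nk : n <= 4 * s * k.
  have k_gt0 : 0 < k by rewrite divn_gt0 ?muln_gt0 //; lia.
  have := ltn_ceil n (_ : 0 < 2 * s); rewrite -/k; nia.
have nP : n ^ t * n ^ t <= P * (k ^ 2) ^ t.
  by rewrite -expnMn /P expnM -!expnMn leq_expn2r // leq_mul.
split; first by rewrite (leq_trans _ Pm) // leq_pmull // muln_gt0 P_gt0.
rewrite -(leq_pmul2l (_ : 0 < 2 * P)) ?muln_gt0 ?P_gt0 //.
have n_gt0 : 0 < n by lia.
move: Pm P_cost nP; set x := n.+1 ^ r; set z := n ^ t; set w := (k ^ 2) ^ t; set a := m ^ t.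
nia.
Qed.

Lemma sqr_divn_mul_le_bin2 n s : 2 <= n -> (n %/ (2 * s)) ^ 2 * s ^ 2 <= 'C(n, 2).
Proof.
move=> n_ge2; have := leq_divM n (2 * s); set k := n %/ (2 * s) => ks.
have bin2E : 'C(n, 2) * 2 = n * n.-1 by rewrite -[2 in LHS]/(2`!) bin_ffact ffactnS ffactn1.
have n1 : n <= 2 * n.-1 by lia.
move: ks bin2E n1; set c := 'C(n, 2); set n' := n.-1; nia.
Qed.

Lemma ln_le x y : (0 < x)%R -> (x <= y)%R -> (ln x <= ln y)%R.
Proof. by move=> x_gt0 [xy | <-]; [apply/Rlt_le/ln_increasing | apply: Rle_refl]. Qed.

Lemma ln_le_sub1 x : (0 < x)%R -> (ln x <= x - 1)%R.
Proof. by move=> x_gt0; have := exp_ineq1_le (ln x); rewrite exp_ln //; lra. Qed.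

Lemma ln_add1_le x : (0 < x)%R -> (ln (x + 1) <= ln x + / x)%R.
Proof.
move=> x_gt0; have inv_pos := Rinv_0_lt_compat _ x_gt0.
rewrite (_ : (x + 1 = x * (1 + / x))%R) ?ln_mult; try lra; last by field; lra.
by have := @ln_le_sub1 (1 + / x)%R; lra.
Qed.

Lemma ln_ratio_le1 N M : 0 < N -> 0 < M -> M <= 2 ^ N -> (ln (INR M) / ln 2 / INR N <= 1)%R.
Proof.
move=> N_gt0 M_gt0 M_le.
have N_pos : (0 < INR N)%R by apply/lt_0_INR/ltP.
have ln2_pos := ln_lt_2.
have : (ln (INR M) <= INR N * ln 2)%R.
  rewrite -ln_pow; last lra.
  apply: ln_le; first exact/lt_0_INR/ltP.
  by have := le_INR _ _ (elimT leP M_le); rewrite INR_expn.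
move=> h; apply: (Rmult_le_reg_r (ln 2 * INR N)); first by apply: Rmult_lt_0_compat; lra.
by replace (ln (INR M) / ln 2 / INR N * (ln 2 * INR N))%R with (ln (INR M)) by (field; lra); lra.
Qed.

Lemma ln_ratio_ge N M d s :
  0 < N -> 0 < s -> 0 < M -> d * s ^ 2 <= N -> 2 ^ N * s ^ N <= M * s ^ d * s.+1 ^ N ->
  (1 - 4 / INR s <= ln (INR M) / ln 2 / INR N)%R.
Proof.
move=> N_gt0 s_gt0 M_gt0 ds_le lower.
have N_pos : (0 < INR N)%R by apply/lt_0_INR/ltP.
have M_pos : (0 < INR M)%R by apply/lt_0_INR/ltP.
have s_pos : (0 < INR s)%R by apply/lt_0_INR/ltP.
have ln2_gt := ln_lt_2.
set x := INR s in s_pos *.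
have ln_lower : (INR N * ln 2 + INR N * ln x <= ln (INR M) + INR d * ln x + INR N * ln (x + 1))%R.
  have := le_INR _ _ (elimT leP lower); rewrite !INR_muln !INR_expn (_ : INR 2 = 2)%R; last first.
    by rewrite /=; lra.
  rewrite S_INR -/x.
  have p2 : (0 < 2 ^ N)%R by apply: pow_lt; lra.
  have px : (0 < x ^ N)%R by apply: pow_lt.
  have pd : (0 < x ^ d)%R by apply: pow_lt.
  have px1 : (0 < (x + 1) ^ N)%R by apply: pow_lt; lra.
  move/(ln_le (Rmult_lt_0_compat _ _ p2 px)).
  by rewrite !ln_mult ?ln_pow //; try lra; apply: Rmult_lt_0_compat.
have ln_succ := ln_add1_le s_pos.
have d_ln : (INR d * ln x <= INR N / x)%R.
  have := le_INR _ _ (elimT leP ds_le); rewrite INR_muln INR_expn => dx2.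
  apply: (Rle_trans _ (INR d * x)).
    by apply: Rmult_le_compat_l; [exact: pos_INR | have := ln_le_sub1 s_pos; lra].
  apply: (Rmult_le_reg_r x) => //; replace (INR N / x * x)%R with (INR N) by (field; lra).
  by move: dx2; rewrite /= Rmult_1_r Rmult_assoc.
have q_pos : (0 <= INR N / x)%R by apply: Rlt_le; apply: Rdiv_lt_0_compat.
apply: (Rmult_le_reg_r (ln 2 * INR N)); first by apply: Rmult_lt_0_compat; lra.
replace (ln (INR M) / ln 2 / INR N * (ln 2 * INR N))%R with (ln (INR M)) by (field; lra).
replace ((1 - 4 / x) * (ln 2 * INR N))%R with (ln 2 * INR N - 4 * ln 2 * (INR N / x))%R
  by (field; lra).
have : (INR N * ln (x + 1) <= INR N * ln x + INR N / x)%R.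
  by rewrite /Rdiv -Rmult_plus_distr_l; apply: Rmult_le_compat_l; lra.
nra.
Qed.

Lemma log_M_L_ratio_bounds n m (L : rel 'I_m) (A : {set 'I_m}) r s t :
  symmetric L -> bipartite_deg L A r -> 0 < s -> 0 < t -> 4 * s <= n ->
  (2 * (4 * s) ^ (2 * t)) ^ t * m ^ t * n.+1 ^ r <= n ^ t ->
  (1 - 4 / INR s <= ln (INR (M_L n L)) / ln 2 / INR 'C(n, 2) <= 1)%R.
Proof.
move=> L_sym L_bip s_gt0 t_gt0 sn cost.
have [n_gt1 n_gt0] : 1 < n /\ 0 < n by split; lia.
have [mn dense] := threshold_of_expn_le s_gt0 t_gt0 sn cost.
set d := (n %/ (2 * s)) ^ 2 in dense.
have d_gt0 : 0 < d by rewrite expn_gt0 divn_gt0 ?muln_gt0 //; lia.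
have lower := M_L_lower_bound d_gt0 s_gt0 (fun H H_graph dH =>
  contains_sub_of_card_ge n_gt0 mn L_sym L_bip H_graph dH dense).
have N_gt0 : 0 < 'C(n, 2) by rewrite bin_gt0.
split; first exact: ln_ratio_ge N_gt0 s_gt0 (M_L_gt0 n L) (sqr_divn_mul_le_bin2 s n_gt1) lower.
exact: ln_ratio_le1 N_gt0 (M_L_gt0 n L) (M_L_le n L).
Qed.

Theorem theorem1p6 (r : nat) (eps : R) (m : nat -> nat)
  (L : forall n, rel 'I_(m n)) (A : forall n, {set 'I_(m n)}) :
  (0 < r)%N -> (0 < eps)%R ->
  (forall n, simple_graph (L n) /\ connected (L n) /\ bipartite_deg (L n) (A n) r) ->
  (exists (C : R) (N : nat), forall n, (N <= n)%N ->
      (INR (m n) <= C * Rpower (INR n) (1 - eps))%R) ->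
  Un_cv (fun n => (ln (INR (M_L n (L n))) / ln 2 / INR 'C(n, 2))%R) 1%R.
Proof.
(* The error term is [4 / s],
   and [r + 2 <= t eps] makes [m ^ t * n.+1 ^ r] negligible against [n ^ t]. *)
move=> _ eps_gt0 L_props [C [N1 m_small]] delta delta_gt0.
have [s s_large] := INR_archimed delta 4 delta_gt0.
have [t t_large] := INR_archimed eps (INR (r + 2)) eps_gt0.
have s_gt0 : 0 < s by case: s s_large => //=; lra.
have t_gt0 : 0 < t by case: t t_large => //=; have := pos_INR (r + 2); lra.
have [N0 cost_small] :=
  eventually_mul_expn_le (Rlt_le _ _ t_large) m_small ((2 * (4 * s) ^ (2 * t)) ^ t).
exists (N0 + 4 * s) => n /leP Nn.
have [[L_sym _] [_ L_bip]] := L_props n.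
have [sn N0n] : 4 * s <= n /\ N0 <= n by split; lia.
have [lo hi] := log_M_L_ratio_bounds L_sym L_bip s_gt0 t_gt0 sn (cost_small n N0n).
have s_delta : (4 / INR s < delta)%R.
  apply: (Rmult_lt_reg_r (INR s)); first exact/lt_0_INR/ltP.
  by rewrite /Rdiv Rmult_assoc Rinv_l; [lra | apply/not_0_INR; lia].
by rewrite /R_dist Rabs_left1; lra.
Qed.
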